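(* Let $R$ be a commutative ring. The following are equivalent: (1) $R$ is clean; (2) $R$ is feckly clean and $R$ is a pm ring; (3) $R$ is feckly clean and whenever $a,b\in R$ satisfy $a+b=1$ there exist $r,s\in R$ with $(1+ar)(1+bs)=0$.
   Context: Rings have identity; $J(R)$ is the Jacobson radical. A ring is clean if every element is the sum of an idempotent and a unit. An element $u\in R$ is full if $RuR=R$. An element $a\in R$ is feckly clean if there exist $e\in R$ and a full element $u\in R$ with $a=e+u$ and $eR(1-e)\subseteq J(R)$; $R$ is feckly clean if every element is feckly clean. A commutative ring is a pm ring if every prime ideal is contained in exactly one maximal ideal. *)

From HB Require Import structures.
From mathcomp Require Import all_boot all_order all_algebra.
Set Implicit Arguments. Unset Strict Implicit. Unset Printing Implicit Defensive.
Import GRing.Theory.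
Local Open Scope ring_scope.

Section Defs.
Variable R : comPzRingType.

Definition is_unit (u : R) : Prop := exists v : R, u * v = 1 /\ v * u = 1.
Definition is_idem (e : R) : Prop := e * e = e.

Definition is_ideal (I : R -> Prop) : Prop :=
  [/\ I 0, (forall x y, I x -> I y -> I (x + y)) & (forall r x, I x -> I (r * x))].
Definition proper_ideal (I : R -> Prop) : Prop := is_ideal I /\ ~ I 1.
Definition maximal_ideal (M : R -> Prop) : Prop :=
  proper_ideal M /\
  forall I : R -> Prop, proper_ideal I -> (forall x, M x -> I x) -> forall x, I x -> M x.
Definition prime_ideal (P : R -> Prop) : Prop :=
  proper_ideal P /\ forall a b, P (a * b) -> P a \/ P b.

Definition jacobson (x : R) : Prop := forall M, maximal_ideal M -> M x.

(* u is full: the two-sided ideal RuR generated by u is R *)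
Definition full (u : R) : Prop :=
  exists n (r s : 'I_n -> R), \sum_(i < n) r i * u * s i = 1.

Definition clean_ring : Prop :=
  forall a : R, exists e u, is_idem e /\ is_unit u /\ a = e + u.

Definition feckly_clean_elt (a : R) : Prop :=
  exists e u, full u /\ a = e + u /\ (forall r, jacobson (e * r * (1 - e))).
Definition feckly_clean_ring : Prop := forall a : R, feckly_clean_elt a.

Definition pm_ring : Prop :=
  forall P, prime_ideal P ->
    exists M, [/\ maximal_ideal M, (forall x, P x -> M x) &
      forall M', maximal_ideal M' -> (forall x, P x -> M' x) -> forall x, M' x <-> M x].
End Defs.

(* Units are full, so clean rings are feckly clean; and a clean decomposition of
   r x, where 1 = m + r x, separates any two maximal ideals over a prime, so clean
   rings are pm. A pm ring satisfies the criterion: otherwise the multiplicative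
   set of all (1 + a r)(1 + b s) misses 0, and a prime ideal maximal among those
   avoiding it lies in a maximal ideal containing a and in one containing b,
   which then coincide and contain a + b = 1. Conversely, in a feckly clean ring
   write a = e + u with u a unit and e idempotent modulo the Jacobson radical;
   the criterion gives x := 1 + e r and y := 1 + (1 - e) s with x y = 0, and
   f := y (x + y)^-1 is an idempotent congruent to e modulo the radical, so
   a = f + (u + (e - f)) is a clean decomposition. *)
From mathcomp Require Import ssreflect ssrfun ssrbool eqtype ssrnat fintype bigop ssralg.
From mathcomp Require Import boolp classical_sets.
From mathcomp Require Import ring.
Set Implicit Arguments. Unset Strict Implicit. Unset Printing Implicit Defensive.
Import GRing.Theory.
Local Open Scope classical_set_scope.
Local Open Scope ring_scope.

Definition pm_criterion (R : comPzRingType) : Prop :=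
  forall a b : R, a + b = 1 -> exists r s : R, (1 + a * r) * (1 + b * s) = 0.

Section Ideals.
Variable R : comPzRingType.
Implicit Types (I M P Q S : set R) (a b x y u j : R).

Lemma ideal0 I : is_ideal I -> I 0.
Proof. by case. Qed.

Lemma idealD I x y : is_ideal I -> I x -> I y -> I (x + y).
Proof. by case=> _ HD _; apply: HD. Qed.

Lemma idealMl I a x : is_ideal I -> I x -> I (a * x).
Proof. by case=> _ _ HM; apply: HM. Qed.

Lemma idealMr I a x : is_ideal I -> I x -> I (x * a).
Proof. by rewrite mulrC; apply: idealMl. Qed.

Lemma idealB I x y : is_ideal I -> I x -> I y -> I (x - y).
Proof. by move=> HI Ix Iy; rewrite -mulN1r; apply: idealD => //; apply: idealMl. Qed.

Lemma ideal_unit I u v : is_ideal I -> I u -> u * v = 1 -> I 1.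
Proof. by move=> HI Iu <-; apply: idealMr. Qed.

Definition ideal_adjoin I a : set R := fun x => exists m r, I m /\ x = m + r * a.

Lemma ideal_adjoin_ideal I a : is_ideal I -> is_ideal (ideal_adjoin I a).
Proof.
move=> HI; split.
- by exists 0, 0; split; [exact: ideal0 | ring].
- move=> _ _ [m [r [Im ->]]] [m' [r' [Im' ->]]].
  by exists (m + m'), (r + r'); split; [exact: idealD | ring].
- move=> s _ [m [r [Im ->]]].
  by exists (s * m), (s * r); split; [exact: idealMl | ring].
Qed.

Lemma ideal_adjoin_sub I a : is_ideal I -> I `<=` ideal_adjoin I a.
Proof. by move=> HI x Ix; exists x, 0; split => //; ring. Qed.

Lemma ideal_adjoin_mem I a : is_ideal I -> ideal_adjoin I a a.
Proof. by move=> HI; exists 0, 1; split; [exact: ideal0 | ring]. Qed.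

(* The empty set is allowed in the chain so that Zorn_bigcup covers the empty chain. *)
Lemma bigcup_chain_ideal (F : set (set R)) :
  F `<=` (fun A => is_ideal A \/ A = set0) -> total_on F subset ->
  is_ideal (\bigcup_(A in F) A) \/ \bigcup_(A in F) A = set0.
Proof.
move=> Fideal Ftot.
have member_ideal A x : F A -> A x -> is_ideal A.
  by move=> FA Ax; case: (Fideal A FA) => // A0; rewrite A0 in Ax.
case: (pselect (exists A, F A /\ is_ideal A)) => [[A [FA HA]] | none]; [left | right].
- split; first by exists A => //; exact: ideal0.
  + move=> x y [A' FA' A'x] [B FB By].
    have [A'B | BA'] := Ftot _ _ FA' FB.
    * by exists B => //; apply: idealD (member_ideal _ _ FB By) (A'B _ A'x) By.
    * by exists A' => //; apply: idealD (member_ideal _ _ FA' A'x) A'x (BA' _ By).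
  + move=> r x [A' FA' A'x]; exists A' => //.
    exact: idealMl (member_ideal _ _ FA' A'x) A'x.
- apply/seteqP; split => // x [A FA Ax].
  by case: none; exists A; split => //; exact: member_ideal Ax.
Qed.

Lemma maximal_avoiding_ideal I S :
  is_ideal I -> (forall x, I x -> ~ S x) ->
  exists P, [/\ is_ideal P, I `<=` P, (forall x, P x -> ~ S x) &
    forall Q, is_ideal Q -> P `<=` Q -> (forall x, Q x -> ~ S x) -> Q `<=` P].
Proof.
move=> HI IS.
pose good A := [/\ is_ideal A, I `<=` A & forall x, A x -> ~ S x].
have good_member (F : set (set R)) A x :
    F `<=` (fun A => good A \/ A = set0) -> F A -> A x -> good A.
  by move=> Fgood FA Ax; case: (Fgood A FA) => // A0; rewrite A0 in Ax.
case: (@Zorn_bigcup R (fun A => good A \/ A = set0)).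
  move=> F Fgood Ftot.
  have Fideal : F `<=` (fun A => is_ideal A \/ A = set0).
    by move=> A FA; case: (Fgood A FA) => [[]|]; [left | right].
  case: (bigcup_chain_ideal Fideal Ftot) => [HU | ->]; [left | by right].
  have [A FA A0] := ideal0 HU.
  have [_ IA _] := good_member _ _ _ Fgood FA A0.
  split => //; first by move=> x /IA; exists A.
  by move=> x [B FB Bx]; have [_ _] := good_member _ _ _ Fgood FB Bx; apply.
move=> P [[[HP IP PS] | P0] Pmax].
  exists P; split => // Q HQ PQ QS x Qx; apply: contrapT => nPx.
  apply: (Pmax Q); last by left; split => // y /IP /PQ.
  by split => // QP; apply: nPx; apply: QP.
exfalso; apply: (Pmax I); last by left; split.
by rewrite P0; split => [x [] | IP]; exact: IP 0 (ideal0 HI).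
Qed.

Lemma proper_ideal_sub_maximal I :
  proper_ideal I -> exists M, maximal_ideal M /\ I `<=` M.
Proof.
move=> [HI nI1].
have [|P [HP IP P1 Pmax]] := maximal_avoiding_ideal (S := eq^~ 1) HI.
  by move=> x Ix x1; apply: nI1; rewrite -x1.
exists P; split => //; split; first by split => // /P1.
by move=> J [HJ nJ1] PJ; apply: Pmax => // x Jx x1; apply: nJ1; rewrite -x1.
Qed.

Lemma maximal_ideal_coprime M a :
  maximal_ideal M -> ~ M a -> exists m r, M m /\ 1 = m + r * a.
Proof.
move=> [[HM M1] Mmax] nMa; apply: contrapT => not_coprime.
apply: nMa; apply: (Mmax (ideal_adjoin M a)).
- split; first exact: ideal_adjoin_ideal.
  by move=> [m [r [Mm E]]]; apply: not_coprime; exists m, r.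
- exact: ideal_adjoin_sub.
- exact: ideal_adjoin_mem.
Qed.

Lemma maximal_ideal_prime M : maximal_ideal M -> prime_ideal M.
Proof.
move=> HM; split; first exact: HM.1.
move=> a b Mab; case: (pselect (M a)) => Ma; [by left | right].
have [m [r [Mm E]]] := maximal_ideal_coprime HM Ma.
have -> : b = m * b + r * (a * b) by rewrite mulrA -mulrDl -E mul1r.
have [[HMi _] _] := HM.
by apply: idealD => //; [apply: idealMr | apply: idealMl].
Qed.

Lemma is_unit_notin_maximal x :
  (forall M, maximal_ideal M -> ~ M x) -> is_unit x.
Proof.
move=> nMx; apply: contrapT => nu.
have [|M [HM xRM]] := proper_ideal_sub_maximal (I := fun y => exists r, y = x * r).
  split; first split.
  - by exists 0; rewrite mulr0.
  - by move=> _ _ [r ->] [s ->]; exists (r + s); rewrite mulrDr.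
  - by move=> s _ [r ->]; exists (s * r); ring.
  by move=> [r xr]; apply: nu; exists r; rewrite [r * x]mulrC -xr.
by apply: (nMx M HM); apply: xRM; exists 1; rewrite mulr1.
Qed.

Lemma maximal_avoiding_prime P S :
  S 1 -> (forall x y, S x -> S y -> S (x * y)) ->
  is_ideal P -> (forall x, P x -> ~ S x) ->
  (forall Q, is_ideal Q -> P `<=` Q -> (forall x, Q x -> ~ S x) -> Q `<=` P) ->
  prime_ideal P.
Proof.
move=> S1 SM HP PS Pmax; split; first by split => // /PS; apply.
have meets_S c : ~ P c -> exists s p t, [/\ S s, P p & s = p + t * c].
  move=> nPc; apply: contrapT => nS; apply: nPc.
  apply: (Pmax _ (ideal_adjoin_ideal c HP) (ideal_adjoin_sub c HP)); last first.
    exact: ideal_adjoin_mem.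
  by move=> x [p [t [Pp E]]] Sx; apply: nS; exists x, p, t.
move=> a b Pab; apply: contrapT => /not_orP[nPa nPb].
have [s1 [p1 [t1 [S1' P1 E1]]]] := meets_S a nPa.
have [s2 [p2 [t2 [S2' P2 E2]]]] := meets_S b nPb.
apply: (PS (s1 * s2)); last exact: SM.
have -> : s1 * s2 = p1 * s2 + (t1 * a) * p2 + (t1 * t2) * (a * b).
  by rewrite E1 E2; ring.
by apply: idealD => //; [apply: idealD => //; [apply: idealMr | apply: idealMl] |
                         apply: idealMl].
Qed.

Lemma ideal_adjoin_proper P a :
  is_ideal P -> (forall r, ~ P (1 + a * r)) -> proper_ideal (ideal_adjoin P a).
Proof.
move=> HP nP; split; first exact: ideal_adjoin_ideal.
move=> [p [t [Pp E]]]; apply: (nP (- t)).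
by have -> : 1 + a * - t = p by rewrite E; ring.
Qed.

Lemma is_unitD_jacobson u j : is_unit u -> jacobson j -> is_unit (u + j).
Proof.
move=> [v [uv _]] Jj; apply: is_unit_notin_maximal => M HM Muj.
have [[HMi M1] _] := HM; apply: M1; apply: (ideal_unit HMi _ uv).
by rewrite -(addrK j u); apply: idealB => //; exact: Jj.
Qed.

Lemma full_is_unit u : full u -> is_unit u.
Proof.
move=> [n [r [s Hu]]]; exists (\sum_(i < n) r i * s i).
have ut : u * (\sum_(i < n) r i * s i) = 1.
  by rewrite -Hu mulr_sumr; apply: eq_bigr => i _; ring.
by split; last rewrite mulrC.
Qed.

Lemma is_unit_full u : is_unit u -> full u.
Proof.
by move=> [v [_ vu]]; exists 1%N, (fun _ => v), (fun _ => 1); rewrite big_ord1 mulr1.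
Qed.

End Ideals.

Section CleanRings.
Variable R : comPzRingType.
Implicit Types (M P : set R) (a b e : R).

Lemma clean_feckly_clean : clean_ring R -> feckly_clean_ring R.
Proof.
move=> Rclean a; have [e [u [e_idem [u_unit ->]]]] := Rclean a.
exists e, u; split; first exact: is_unit_full.
split => // r M [[HM _] _].
by rewrite mulrBr mulr1 mulrAC e_idem subrr; exact: ideal0.
Qed.

(* If x is in M but not in M', write 1 = m + r x with m in M' and clean r x = e + u:
   P contains e (1 - e) = 0, so it contains e, making u = r x - e a unit in M, or
   1 - e, making u = (1 - e) - m a unit in M'. *)
Lemma clean_maximal_over_prime_sub P M M' :
  clean_ring R -> prime_ideal P -> maximal_ideal M -> maximal_ideal M' ->
  P `<=` M -> P `<=` M' -> M `<=` M'.
Proof.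
move=> Rclean [[HP _] Pprime] HM HM' PM PM' x Mx; apply: contrapT => nM'x.
have [m [r [M'm E]]] := maximal_ideal_coprime HM' nM'x.
have [e [u [e_idem [[v [uv _]] rx]]]] := Rclean (r * x).
have [[HMi M1] _] := HM; have [[HMi' M1'] _] := HM'.
have u_def : u = r * x - e by rewrite rx; ring.
have /Pprime[Pe | P1e] : P (e * (1 - e)).
  by rewrite mulrBr mulr1 e_idem subrr; exact: ideal0.
- apply: M1; apply: (ideal_unit HMi _ uv); rewrite u_def.
  by apply: idealB => //; [apply: idealMl | apply: PM].
- apply: M1'; apply: (ideal_unit HMi' _ uv).
  have -> : u = (1 - e) - m by rewrite u_def E; ring.
  by apply: idealB => //; apply: PM'.
Qed.

Lemma clean_pm_ring : clean_ring R -> pm_ring R.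
Proof.
move=> Rclean P Pprime; have [[HP nP1] _] := Pprime.
have [M [HM PM]] := proper_ideal_sub_maximal (conj HP nP1).
exists M; split => // M' HM' PM' x; split.
- exact: (clean_maximal_over_prime_sub Rclean Pprime HM' HM PM' PM).
- exact: (clean_maximal_over_prime_sub Rclean Pprime HM HM' PM PM').
Qed.

Lemma pm_ring_criterion : pm_ring R -> pm_criterion R.
Proof.
move=> Rpm a b ab1; apply: contrapT => no_zero.
pose S z := exists r s, z = (1 + a * r) * (1 + b * s).
have S1 : S 1 by exists 0, 0; ring.
have SM x y : S x -> S y -> S (x * y).
  move=> [r [s ->]] [r' [s' ->]].
  by exists (r + r' + a * r * r'), (s + s' + b * s * s'); ring.
have zero_ideal : is_ideal (eq^~ 0 : set R).
  by split => //; [move=> x y -> ->; rewrite addr0 | move=> r x ->; rewrite mulr0].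
have [|P [HP _ PS Pmax]] := maximal_avoiding_ideal zero_ideal (S := S).
  by move=> x -> [r [s E]]; apply: no_zero; exists r, s; rewrite -E.
have Pprime := maximal_avoiding_prime S1 SM HP PS Pmax.
have [|Ma [HMa aPMa]] := @proper_ideal_sub_maximal _ (ideal_adjoin P a).
  by apply: ideal_adjoin_proper => // r /PS; apply; exists r, 0; ring.
have [|Mb [HMb bPMb]] := @proper_ideal_sub_maximal _ (ideal_adjoin P b).
  by apply: ideal_adjoin_proper => // s /PS; apply; exists 0, s; ring.
have [M [HM _ M_unique]] := Rpm P Pprime.
have Ma_a : M a.
  apply: (M_unique Ma HMa (fun x Px => aPMa x (ideal_adjoin_sub a HP Px)) a).1.
  exact/aPMa/ideal_adjoin_mem.
have Mb_b : M b.
  apply: (M_unique Mb HMb (fun x Px => bPMb x (ideal_adjoin_sub b HP Px)) b).1.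
  exact/bPMb/ideal_adjoin_mem.
have [[HMi M1] _] := HM; apply: M1; rewrite -ab1; exact: idealD.
Qed.

(* With x := 1 + e r and y := 1 + (1 - e) s and x y = 0, every maximal ideal
   contains exactly one of x, y: the one matching whichever of e, 1 - e it contains. *)
Lemma lift_idempotent e :
  pm_criterion R -> (forall M, maximal_ideal M -> M e \/ M (1 - e)) ->
  exists f, is_idem f /\ jacobson (e - f).
Proof.
move=> Rcrit e_idem_mod.
have [r [s xy0]] := Rcrit e (1 - e) (subrKC e 1).
set x := 1 + e * r in xy0; set y := 1 + (1 - e) * s in xy0.
have split_by_e M : maximal_ideal M -> M e /\ M y /\ ~ M x \/ M (1 - e) /\ M x /\ ~ M y.
  move=> HM; have [[HMi M1] _] := HM; have Mprime := (maximal_ideal_prime HM).2.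
  have /Mprime Mxy : M (x * y) by rewrite xy0; exact: ideal0.
  have not_both c t : M c -> M (1 + c * t) -> False.
    move=> Mc M1ct; apply: M1; rewrite -(addrK (c * t) 1).
    by apply: idealB => //; apply: idealMr.
  case: (e_idem_mod M HM) => Me; [left | right]; split => //.
  - have nMx : ~ M x := not_both _ _ Me.
    by split => //; case: Mxy.
  - have nMy : ~ M y := not_both _ _ Me.
    by split => //; case: Mxy.
have [w [xyw _]] : is_unit (x + y).
  apply: is_unit_notin_maximal => M HM Mxy; have [[HMi _] _] := HM.
  case: (split_by_e M HM) => [[_ [My nMx]] | [_ [Mx nMy]]].
  - by apply: nMx; rewrite -(addrK y x); apply: idealB.
  - by apply: nMy; rewrite -(addKr x y) addrC; apply: idealB.
have one_sub_f : 1 - y * w = x * w by rewrite -xyw; ring.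
exists (y * w); split.
  rewrite /is_idem; have -> : y * w * (y * w) = y * w - y * w * (1 - y * w) by ring.
  by rewrite one_sub_f mulrACA (mulrC y x) xy0 mul0r subr0.
move=> M HM; have [[HMi _] _] := HM.
case: (split_by_e M HM) => [[Me [My _]] | [M1e [Mx _]]].
- by apply: idealB => //; apply: idealMr.
- have -> : e - y * w = x * w - (1 - e) by rewrite -one_sub_f; ring.
  by apply: idealB => //; apply: idealMr.
Qed.

Lemma feckly_clean_criterion_clean :
  feckly_clean_ring R -> pm_criterion R -> clean_ring R.
Proof.
move=> Rfeckly Rcrit a; have [e [u [u_full [-> eJ]]]] := Rfeckly a.
have e_idem_mod M : maximal_ideal M -> M e \/ M (1 - e).
  move=> HM; apply: (maximal_ideal_prime HM).2.
  by have := eJ 1 M HM; rewrite mulr1.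
have [f [f_idem fe]] := lift_idempotent Rcrit e_idem_mod.
exists f, (u + (e - f)); split => //; split; last by ring.
exact: is_unitD_jacobson (full_is_unit u_full) fe.
Qed.

End CleanRings.

Theorem theorem5p6 (R : comPzRingType) :
  (clean_ring R <-> (feckly_clean_ring R /\ pm_ring R)) /\
  (clean_ring R <->
     (feckly_clean_ring R /\
      forall a b : R, a + b = 1 -> exists r s : R, (1 + a * r) * (1 + b * s) = 0)).
Proof.
have clean_feckly_pm := fun Rclean : clean_ring R =>
  conj (clean_feckly_clean Rclean) (clean_pm_ring Rclean).
split; split.
- exact: clean_feckly_pm.
- by move=> [Rfeckly /pm_ring_criterion]; exact: feckly_clean_criterion_clean.
- by move=> /clean_feckly_pm[Rfeckly /pm_ring_criterion Rcrit]; split.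
- by move=> [Rfeckly Rcrit]; exact: feckly_clean_criterion_clean.
Qed.
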